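(* Fix $k,s\in\mathbb{N}$ and let $\omega=\omega(n)\to\infty$ as $n\to\infty$. (i) If $\alpha=\alpha(n)$ is bounded away from $0$, then $\lim_{n\to\infty}P\bigl(|(D_{n,1}^{\alpha})^s+\cdots+(D_{n,n}^{\alpha})^s-\mu_{s,\alpha}n|<\omega\sqrt{n}\bigr)=1$. (ii) $\lim_{n\to\infty}P\bigl(|(D_{n,1}^{\infty})^s+\cdots+(D_{n,n}^{\infty})^s-\mu_{s,\infty}n|<\omega\sqrt{n}\bigr)=1$.
   Context: A $k$-out map on $[n]$ is a map $M:[n]\to[n]^k$; the in-degree of vertex $j$ is the total number of coordinates, over all vertices and all $k$ labels, of the images equal to $j$. For $\alpha\in(0,\infty)$ the random $k$-out map $M_{n,k}^{\alpha}$ has law $P(M_{n,k}^{\alpha}=M)=\prod_{j=1}^n \alpha^{\overline{d_j}}/(\alpha n)^{\overline{kn}}$, with $(d_1,\dots,d_n)$ the in-degree sequence of $M$ and $x^{\overline{y}}=x(x+1)\cdots(x+y-1)$; $M_{n,k}^{\infty}$ is the uniformly random $k$-out map on $[n]$. $(D_{n,1}^{\alpha},\dots,D_{n,n}^{\alpha})$ and $(D_{n,1}^{\infty},\dots,D_{n,n}^{\infty})$ are their in-degree sequences, and $\mu_{s,\alpha}=\mathbb{E}[(D_{n,j}^{\alpha})^s]$, $\mu_{s,\infty}=\mathbb{E}[(D_{n,j}^{\infty})^s]$ (independent of $j$). *)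

From HB Require Import structures.
From mathcomp Require Import all_boot all_order all_algebra.
From mathcomp Require Import all_classical all_reals all_analysis.
Set Implicit Arguments. Unset Strict Implicit. Unset Printing Implicit Defensive.
Import Order.TTheory GRing.Theory Num.Theory.
Local Open Scope ring_scope.

Definition kout_map (n k : nat) := {ffun 'I_n -> k.-tuple 'I_n}.

Definition indeg (n k : nat) (M : kout_map n k) (j : 'I_n) : nat :=
  (\sum_(i < n) count_mem j (M i))%N.

Definition rising (R : ringType) (x : R) (y : nat) : R :=
  \prod_(i < y) (x + i%:R).

Definition law_alpha (R : realFieldType) (n k : nat) (alpha : R)
    (M : kout_map n k) : R :=
  (\prod_(j < n) rising alpha (indeg M j)) / rising (alpha * n%:R) (k * n).

(* law of M_{n,k}^oo : uniform on k-out maps *)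
Definition law_unif (R : realFieldType) (n k : nat) (M : kout_map n k) : R :=
  1 / (#|{: kout_map n k}|)%:R.

Definition prob (R : realFieldType) (n k : nat) (law : kout_map n k -> R)
    (E : pred (kout_map n k)) : R :=
  \sum_(M : kout_map n k | E M) law M.

Definition expect (R : realFieldType) (n k : nat) (law : kout_map n k -> R)
    (X : kout_map n k -> R) : R :=
  \sum_(M : kout_map n k) law M * X M.

(* mu_s = E[(D_{n,1})^s] (taken at the first vertex; 0 when n = 0) *)
Definition mu_moment (R : realFieldType) (n k s : nat)
    (law : kout_map n k -> R) : R :=
  match n return (kout_map n k -> R) -> R with
  | 0 => fun _ => 0
  | n'.+1 => fun law =>
      expect law (fun M => ((indeg M (ord0 : 'I_n'.+1)) ^ s)%:R)
  end law.

Definition power_sum (R : ringType) (n k s : nat) (M : kout_map n k) : R :=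
  \sum_(j < n) ((indeg M j) ^ s)%:R.

Definition conc_event (R : realType) (n k s : nat) (mu w : R) :
    pred (kout_map n k) :=
  fun M => `|power_sum R s M - mu * n%:R| < w * Num.sqrt (n%:R).

Arguments law_alpha {R} n k alpha M.
Arguments law_unif {R} n k M.
Arguments prob {R n k} law E.
Arguments mu_moment {R n k} s law.
Arguments conc_event {R n k} s mu w M.

(* Both laws are exchangeable urn laws on the maps from the k n half-edges to
   the n vertices: the law of M^alpha is the Polya urn with initial mass alpha
   per vertex, the uniform law is the urn without reinforcement.  Expanding
   D_j = \sum_p 1{p -> j} and using exchangeability, E[D_j^a 1{S -> j}]
   obeys a recursion in a and |S| bounding E[D_j^(2s)] by a constant that
   depends only on k, s and a lower bound c of alpha, while distinct vertices
   are negatively correlated: E[D_i^s D_j^s] <= mu_s^2.  Hence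
   Var(\sum_j D_j^s) = O(n), and Chebyshev's inequality at distance
   omega sqrt n bounds the failure probability by O(1 / omega^2). *)

From HB Require Import structures.
From mathcomp Require Import all_boot all_order all_algebra.
From mathcomp Require Import all_classical all_reals all_analysis.
From mathcomp Require Import finset zify ring.
Import Order.TTheory GRing.Theory Num.Theory.
Import numFieldNormedType.Exports.
Set Implicit Arguments. Unset Strict Implicit. Unset Printing Implicit Defensive.
Local Open Scope ring_scope.

Section FiniteChebyshev.
Variables (R : realFieldType) (T : finType) (L X : T -> R).

Lemma sum_sqr_centered (m : R) : \sum_x L x = 1 -> \sum_x L x * X x = m ->
  \sum_x L x * (X x - m) ^+ 2 = \sum_x L x * X x ^+ 2 - m ^+ 2.
Proof.
move=> L1 LX.
transitivity (\sum_x L x * X x ^+ 2 - 2%:R * m * \sum_x L x * X x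
              + m ^+ 2 * \sum_x L x).
  by rewrite !mulr_sumr -sumrN -!big_split /=; apply: eq_bigr => x _; ring.
by rewrite LX L1; ring.
Qed.

Hypothesis L_ge0 : forall x, 0 <= L x.

Lemma chebyshev_sum (m t : R) : 0 < t ->
  \sum_(x | t <= `|X x - m|) L x <= (\sum_x L x * (X x - m) ^+ 2) / t ^+ 2.
Proof.
move=> t_gt0; rewrite mulr_suml [leRHS](bigID (fun x => t <= `|X x - m|)) /=.
rewrite -[leLHS]addr0; apply: lerD.
  apply: ler_sum => x le_t; rewrite -mulrA ler_peMr //.
  rewrite ler_pdivlMr ?exprn_gt0 // mul1r -[(X x - m) ^+ 2]real_normK ?num_real //.
  by apply: lerXn2r; rewrite ?nnegrE ?normr_ge0 ?(ltW t_gt0).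
by apply: sumr_ge0 => x _; rewrite divr_ge0 ?sqr_ge0 // mulr_ge0 ?L_ge0 ?sqr_ge0.
Qed.

Lemma chebyshev_sum_lt (m t : R) : \sum_x L x = 1 -> 0 < t ->
  1 - (\sum_x L x * (X x - m) ^+ 2) / t ^+ 2 <= \sum_(x | `|X x - m| < t) L x.
Proof.
move=> L1 t_gt0; rewrite lerBlDr -{1}L1 (bigID (fun x => `|X x - m| < t)) /=.
rewrite lerD2l (eq_bigl (fun x => t <= `|X x - m|)) => [|x]; last by rewrite -leNgt.
exact: chebyshev_sum.
Qed.

Lemma sum_pred_le1 (E : pred T) : \sum_x L x = 1 -> \sum_(x | E x) L x <= 1.
Proof. by move=> <-; rewrite [leRHS](bigID E) /= lerDl sumr_ge0. Qed.

End FiniteChebyshev.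

Section RisingBy.
Variables (R : realFieldType) (beta : R).

Definition rising_by (x : R) (m : nat) : R := \prod_(i < m) (x + beta * i%:R).

Lemma rising_by0 x : rising_by x 0 = 1.
Proof. by rewrite /rising_by big_ord0. Qed.

Lemma rising_bySr x m : rising_by x m.+1 = rising_by x m * (x + beta * m%:R).
Proof. by rewrite /rising_by big_ord_recr. Qed.

Lemma rising_bySl x m : rising_by x m.+1 = x * rising_by (x + beta) m.
Proof.
rewrite /rising_by big_ord_recl mulr0 addr0; congr (_ * _).
by apply: eq_bigr => i _; rewrite lift0 /= -addn1 natrD mulrDr mulr1 addrAC addrA.
Qed.

Lemma rising_byD x a b :
  rising_by x (a + b) = rising_by x a * rising_by (x + beta * a%:R) b.
Proof.
rewrite /rising_by big_split_ord /=; congr (_ * _).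
by apply: eq_bigr => i _; rewrite natrD mulrDr addrA.
Qed.

Hypothesis beta_ge0 : 0 <= beta.

Lemma rising_by_ge0 x m : 0 <= x -> 0 <= rising_by x m.
Proof. by move=> x_ge0; apply: prodr_ge0 => i _; rewrite addr_ge0 ?mulr_ge0. Qed.

Lemma rising_by_gt0 x m : 0 < x -> 0 < rising_by x m.
Proof. by move=> x_gt0; apply: prodr_gt0 => i _; rewrite ltr_wpDr ?mulr_ge0. Qed.

Lemma ler_rising_by x y m : 0 <= x -> x <= y -> rising_by x m <= rising_by y m.
Proof.
move=> x_ge0 le_xy; apply: ler_prod => i _.
by rewrite addr_ge0 ?mulr_ge0 //= lerD2r.
Qed.

End RisingBy.

Lemma rising_by_step1 (R : realFieldType) (x : R) m : rising_by 1 x m = rising x m.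
Proof. by apply: eq_bigr => i _; rewrite mul1r. Qed.

Lemma rising_by_step0 (R : realFieldType) (x : R) m : rising_by 0 x m = x ^+ m.
Proof.
rewrite /rising_by (eq_bigr (fun=> x)) ?prodr_const ?card_ord // => i _.
by rewrite mul0r addr0.
Qed.

Section PolyaUrn.
Variables (R : realFieldType) (P : finType) (n : nat) (alpha beta : R).
Hypotheses (n_gt0 : (0 < n)%N) (alpha_gt0 : 0 < alpha) (beta_ge0 : 0 <= beta).

Local Notation colouring := {ffun P -> 'I_n}.
Implicit Types (S T : {set P}) (g h : colouring) (j v : 'I_n).

Definition nfibre (g : colouring) (S : {set P}) (j : 'I_n) : nat :=
  (\sum_(p in S) (g p == j))%N.

Definition deg (g : colouring) (j : 'I_n) : nat := nfibre g setT j.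

Definition urn_weight (S : {set P}) (g : colouring) : R :=
  \prod_(j < n) rising_by beta alpha (nfibre g S j).

Definition urn_mass : R := alpha * n%:R.

(* The points of P draw colours one after the other, colour j being drawn with
   probability proportional to alpha + beta * (number of earlier draws of j).
   For beta = 1 this is the law of M^alpha on k-out maps, for alpha = 1 and
   beta = 0 the uniform law. *)
Definition urn_law (g : colouring) : R :=
  urn_weight setT g / rising_by beta urn_mass #|P|.

Definition same_colour_prob (m : nat) : R :=
  rising_by beta alpha m / rising_by beta urn_mass m.

Definition fupdate (h : colouring) (p0 : P) (v : 'I_n) : colouring :=
  [ffun p => if p == p0 then v else h p].

Lemma urn_mass_gt0 : 0 < urn_mass.
Proof. by rewrite mulr_gt0 // ltr0n. Qed.

Lemma urn_weight_ge0 S g : 0 <= urn_weight S g.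
Proof. by apply: prodr_ge0 => j _; rewrite rising_by_ge0 ?(ltW alpha_gt0). Qed.

Lemma urn_law_ge0 g : 0 <= urn_law g.
Proof. by rewrite divr_ge0 ?urn_weight_ge0 ?rising_by_ge0 ?(ltW urn_mass_gt0). Qed.

Lemma same_colour_prob_ge0 m : 0 <= same_colour_prob m.
Proof. by rewrite divr_ge0 ?rising_by_ge0 ?(ltW alpha_gt0) ?(ltW urn_mass_gt0). Qed.

Lemma sum_nfibre g S : (\sum_(j < n) nfibre g S j)%N = #|S|.
Proof.
rewrite /nfibre exchange_big /= -sum1_card; apply: eq_bigr => p _.
rewrite (bigD1 (g p)) //= eqxx big1 ?addn0 // => j /negbTE.
by rewrite eq_sym => ->.
Qed.

Lemma nfibre_fupdate h S p0 v j : p0 \notin S ->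
  nfibre (fupdate h p0 v) (p0 |: S) j = (nfibre h S j + (v == j))%N.
Proof.
move=> p0S; rewrite /nfibre big_setU1 //= ffunE eqxx addnC; congr (_ + _)%N.
apply: eq_bigr => p pS; rewrite ffunE; case: (p =P p0) => // p_p0.
by rewrite -p_p0 pS in p0S.
Qed.

Lemma urn_weight_fupdate h S p0 v : p0 \notin S ->
  urn_weight (p0 |: S) (fupdate h p0 v) =
  urn_weight S h * (alpha + beta * (nfibre h S v)%:R).
Proof.
move=> p0S; rewrite /urn_weight (bigD1 v) //= [in RHS](bigD1 v) //=.
rewrite nfibre_fupdate // eqxx addn1 rising_bySr mulrAC; congr (_ * _ * _).
by apply: eq_bigr => j jv; rewrite nfibre_fupdate // eq_sym (negbTE jv) addn0.
Qed.

Lemma sum_urn_weight_fupdate h S p0 : p0 \notin S ->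
  \sum_(v < n) urn_weight (p0 |: S) (fupdate h p0 v) =
  urn_weight S h * (urn_mass + beta * #|S|%:R).
Proof.
move=> p0S; under eq_bigr do rewrite urn_weight_fupdate //.
rewrite -mulr_sumr big_split /= sumr_const card_ord -mulr_sumr -natr_sum.
by rewrite sum_nfibre -[alpha *+ n]mulr_natr.
Qed.

Lemma agree_fupdate g h S p0 v : p0 \notin S ->
  [forall p in p0 |: S, g p == fupdate h p0 v p] =
  [forall p in S, g p == h p] && (g p0 == v).
Proof.
move=> p0S; apply/forall_inP/andP => [agree|[/forall_inP agree /eqP <-] p].
  split; last by have := agree p0; rewrite setU11 ffunE eqxx => /(_ isT).
  apply/forall_inP => p pS; have := agree p; rewrite setU1r // ffunE.
  by case: (p =P p0) => [p_p0|_ /(_ isT)]; first by rewrite -p_p0 pS in p0S.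
rewrite ffunE; case: (p =P p0) => [-> _ //|p_p0 /setU1P[/p_p0[]|]].
exact: agree.
Qed.

(* Exchangeability: conditionally on the colours of S, the remaining draws
   behave like a fresh urn in which S has already been drawn. *)
Lemma sum_urn_weight_agree S h :
  \sum_(g : colouring | [forall p in S, g p == h p]) urn_weight setT g =
  urn_weight S h * rising_by beta (urn_mass + beta * #|S|%:R) (#|P| - #|S|).
Proof.
move: {2}#|~: S| (erefl #|~: S|) => m; elim: m S h => [|m IH] S h cardSC.
  have {cardSC}-> : S = setT by rewrite -[S]setCK (cards0_eq cardSC) setC0.
  rewrite cardsT subnn rising_by0 mulr1 (big_pred1 h) // => g /=.
  apply/forall_inP/eqP => [agree|-> //].
  by apply/ffunP => p; apply/eqP/agree; rewrite inE.
have [p0 p0S] : exists p0, p0 \notin S.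
  have /card_gt0P[p0] : (0 < #|~: S|)%N by rewrite cardSC.
  by rewrite in_setC; exists p0.
rewrite (partition_big (fun g : colouring => g p0) xpredT) //=.
have card_p0S : #|p0 |: S| = #|S|.+1 by rewrite cardsU1 p0S.
under eq_bigr => v _.
  rewrite (eq_bigl (fun g => [forall p in p0 |: S, g p == fupdate h p0 v p]));
    last by move=> g; rewrite agree_fupdate.
  rewrite IH; last by move: (cardsC S) (cardsC (p0 |: S)); rewrite cardSC card_p0S; lia.
  over.
rewrite -mulr_suml sum_urn_weight_fupdate // -mulrA card_p0S; congr (_ * _).
have lt_SP : (#|S| < #|P|)%N by rewrite -card_p0S max_card.
rewrite -[(#|P| - #|S|)%N]prednK ?subn_gt0 // rising_bySl -subnS.
by rewrite -natr1 mulrDr mulr1 addrA.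
Qed.

Lemma urn_law_agree S h :
  \sum_g urn_law g * ([forall p in S, g p == h p] : nat)%:R =
  urn_weight S h / rising_by beta urn_mass #|S|.
Proof.
rewrite (bigID (fun g : colouring => [forall p in S, g p == h p])) /=.
rewrite [X in _ + X]big1 ?addr0 => [|g /negbTE ->]; last by rewrite mulr0.
under eq_bigr => g -> do rewrite mulr1.
rewrite -mulr_suml sum_urn_weight_agree /urn_law -{2}(subnKC (max_card (mem S))).
rewrite rising_byD; field.
by rewrite !gt_eqF ?rising_by_gt0 ?ltr_wpDr ?mulr_ge0 ?urn_mass_gt0.
Qed.

Lemma urn_weight_const S j : urn_weight S [ffun => j] = rising_by beta alpha #|S|.
Proof.
rewrite /urn_weight (bigD1 j) //= big1 ?mulr1 => [|i ij].
  by rewrite /nfibre (eq_bigr (fun=> 1%N)) ?sum1_card // => p _; rewrite ffunE eqxx.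
by rewrite /nfibre big1 ?rising_by0 // => p _; rewrite ffunE eq_sym (negbTE ij).
Qed.

Lemma urn_same_colour S j :
  \sum_g urn_law g * ([forall p in S, g p == j] : nat)%:R = same_colour_prob #|S|.
Proof.
rewrite /same_colour_prob -(urn_weight_const S j) -urn_law_agree.
apply: eq_bigr => g _; congr (_ * (nat_of_bool _)%:R).
by apply: eq_forallb => p; rewrite ffunE.
Qed.

Lemma forall_in_set0 g j : [forall p in set0, g p == j].
Proof. by apply/forall_inP => p; rewrite inE. Qed.

Lemma urn_law_sum1 : \sum_g urn_law g = 1.
Proof.
have := urn_same_colour set0 (Ordinal n_gt0).
rewrite cards0 /same_colour_prob !rising_by0 divr1 => <-.
by apply: eq_bigr => g _; rewrite forall_in_set0 mulr1.
Qed.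

Lemma deg_powS_indicator g j a S :
  (deg g j ^ a.+1 * [forall p in S, g p == j])%N =
  (\sum_p deg g j ^ a * [forall q in p |: S, g q == j])%N.
Proof.
rewrite expnSr -mulnA {2}/deg /nfibre (eq_bigl predT) => [|p]; last by rewrite inE.
rewrite big_distrl big_distrr /=; apply: eq_bigr => p _; congr (_ * _)%N.
rewrite mulnb; congr nat_of_bool.
apply/andP/forall_inP => [[/eqP gp /forall_inP agree] q|agree].
  by case/setU1P => [->|/agree]; rewrite ?gp.
split; first by apply: agree; rewrite setU11.
by apply/forall_inP => q qS; apply: agree; rewrite setU1r.
Qed.

(* See [urn_mixed_moment]: each step expands one factor
   deg g j = \sum_p 1{g p = j}. *)
Fixpoint mixed_moment (a : nat) (S : {set P}) : R :=
  if a is a'.+1 then \sum_p mixed_moment a' (p |: S) else same_colour_prob #|S|.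

Lemma urn_mixed_moment a S j :
  \sum_g urn_law g * (deg g j ^ a * [forall p in S, g p == j])%:R =
  mixed_moment a S.
Proof.
elim: a S => [|a IH] S /=.
  by rewrite -(urn_same_colour S j); apply: eq_bigr => g _; rewrite expn0 mul1n.
under eq_bigr do rewrite deg_powS_indicator natr_sum mulr_sumr.
by rewrite exchange_big /=; apply: eq_bigr => p _; apply: IH.
Qed.

Lemma mixed_moment_ge0 a S : 0 <= mixed_moment a S.
Proof.
rewrite -(urn_mixed_moment a S (Ordinal n_gt0)).
by apply: sumr_ge0 => g _; rewrite mulr_ge0 ?urn_law_ge0.
Qed.

Lemma urn_weight_two_colours S T j1 j2 : [disjoint S & T] -> j1 != j2 ->
  urn_weight (S :|: T) [ffun p => if p \in S then j1 else j2] =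
  rising_by beta alpha #|S| * rising_by beta alpha #|T|.
Proof.
move=> dST j12; set h := [ffun p => _].
have nfibre_h j : nfibre h (S :|: T) j = (#|S| * (j1 == j) + #|T| * (j2 == j))%N.
  transitivity (\sum_(p in S) (h p == j) + \sum_(p in T) (h p == j))%N.
    by rewrite -bigU //; apply: eq_bigl => p; rewrite !inE.
  congr (_ + _)%N; rewrite -sum_nat_const; apply: eq_bigr => p pX.
    by rewrite ffunE pX.
  by rewrite ffunE (disjointFl dST pX).
rewrite /urn_weight (bigD1 j1) //= (bigD1 j2) 1?eq_sym //= big1 => [|j /andP[jj1 jj2]].
  by rewrite mulr1 !nfibre_h !eqxx eq_sym (negbTE j12) !muln0 muln1 addn0 add0n muln1.
by rewrite nfibre_h eq_sym (negbTE jj1) eq_sym (negbTE jj2) !muln0 rising_by0.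
Qed.

(* Distinct colours are negatively correlated. *)
Lemma two_colours_prob_le a b :
  rising_by beta alpha a * rising_by beta alpha b / rising_by beta urn_mass (a + b)
  <= same_colour_prob a * same_colour_prob b.
Proof.
have mass_ge0 := ltW urn_mass_gt0.
rewrite rising_byD /same_colour_prob mulf_div.
apply: ler_wpM2l; first by rewrite mulr_ge0 ?rising_by_ge0 ?(ltW alpha_gt0).
rewrite lef_pV2 ?posrE ?mulr_gt0 ?rising_by_gt0 ?ltr_wpDr ?mulr_ge0 ?urn_mass_gt0 //.
by rewrite ler_pM2l ?rising_by_gt0 ?urn_mass_gt0 // ler_rising_by // lerDl mulr_ge0.
Qed.

Lemma urn_two_colours_le S T j1 j2 : j1 != j2 ->
  \sum_g urn_law g * ([forall p in S, g p == j1] * [forall p in T, g p == j2])%:R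
  <= same_colour_prob #|S| * same_colour_prob #|T|.
Proof.
move=> j12; have [dST|/pred0Pn[p /andP[pS pT]]] := boolP [disjoint S & T]; last first.
  rewrite big1 => [|g _]; first exact: (mulr_ge0 (same_colour_prob_ge0 _)
                                            (same_colour_prob_ge0 _)).
  rewrite mulnb.
  suff -> : [forall q in S, g q == j1] && [forall q in T, g q == j2] = false.
    by rewrite mulr0.
  apply/negbTE/negP => /andP[/forall_inP/(_ p pS)/eqP g1 /forall_inP/(_ p pT)/eqP g2].
  by rewrite -g1 -g2 eqxx in j12.
set h := [ffun p => if p \in S then j1 else j2].
have agree_h g : [forall p in S :|: T, g p == h p] =
    [forall p in S, g p == j1] && [forall p in T, g p == j2].
  apply/forall_inP/andP => [agree|[/forall_inP agree1 /forall_inP agree2] p].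
    split; apply/forall_inP => p pX; have := agree p; rewrite inE ffunE.
      by rewrite pX => /(_ isT).
    by rewrite pX orbT (disjointFl dST pX) => /(_ isT).
  rewrite inE ffunE => /orP[pS|pT]; first by rewrite pS agree1.
  by rewrite (disjointFl dST pT) agree2.
under eq_bigr do rewrite mulnb -agree_h.
rewrite urn_law_agree urn_weight_two_colours // cardsU (disjoint_setI0 dST).
by rewrite cards0 subn0 two_colours_prob_le.
Qed.

Lemma urn_mixed_moment2_le j1 j2 a b S T : j1 != j2 ->
  \sum_g urn_law g * ((deg g j1 ^ a * [forall p in S, g p == j1]) *
                      (deg g j2 ^ b * [forall p in T, g p == j2]))%:R
  <= mixed_moment a S * mixed_moment b T.
Proof.
move=> j12; elim: a S T => [|a IHa] S T /=; last first.
  under eq_bigr do rewrite deg_powS_indicator big_distrl natr_sum mulr_sumr /=.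
  by rewrite exchange_big /= mulr_suml; apply: ler_sum => p _; apply: IHa.
elim: b T => [|b IHb] T /=.
  by under eq_bigr do rewrite !expn0 !mul1n; apply: urn_two_colours_le.
under eq_bigr do rewrite deg_powS_indicator big_distrr natr_sum mulr_sumr /=.
by rewrite exchange_big /= mulr_sumr; apply: ler_sum => p _; apply: IHb.
Qed.

Variables (k : nat) (c : R).
Hypotheses (c_gt0 : 0 < c) (c_le_alpha : c <= alpha) (beta_le1 : beta <= 1)
  (card_P : #|P| = (k * n)%N).

Definition growth_bound (m : nat) : R := k%:R * (1 + m%:R / c).

Fixpoint moment_bound (a m : nat) : R :=
  if a is a'.+1 then m%:R * moment_bound a' m + growth_bound m * moment_bound a' m.+1
  else 1.

Lemma moment_bound_ge0 a m : 0 <= moment_bound a m.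
Proof.
elim: a m => [|a IH] m //=.
by rewrite addr_ge0 ?mulr_ge0 ?IH ?addr_ge0 ?divr_ge0 ?(ltW c_gt0).
Qed.

Lemma same_colour_probS m :
  same_colour_prob m.+1 =
  same_colour_prob m * ((alpha + beta * m%:R) / (urn_mass + beta * m%:R)).
Proof.
rewrite /same_colour_prob !rising_bySr; field.
by rewrite !gt_eqF ?rising_by_gt0 ?ltr_wpDr ?mulr_ge0 ?urn_mass_gt0.
Qed.

(* The only place where [c <= alpha] and [beta <= 1] are used: the bound is
   uniform in n. *)
Lemma same_colour_probS_le m :
  (#|P| - m)%:R * same_colour_prob m.+1 <= growth_bound m * same_colour_prob m.
Proof.
rewrite same_colour_probS mulrCA [leRHS]mulrC.
apply: ler_wpM2l; first exact: same_colour_prob_ge0.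
have num_ge0 : 0 <= alpha + beta * m%:R by rewrite addr_ge0 ?mulr_ge0 ?(ltW alpha_gt0).
have mass_gt0 := urn_mass_gt0.
apply: (@le_trans _ _ ((k * n)%:R * ((alpha + beta * m%:R) / urn_mass))).
  apply: ler_pM; rewrite ?ler0n ?divr_ge0 ?ler_nat ?card_P ?leq_subr //.
    by rewrite addr_ge0 ?(ltW mass_gt0) ?mulr_ge0 ?ler0n.
  by rewrite ler_wpM2l // lef_pV2 ?posrE ?ltr_wpDr ?mulr_ge0 // lerDl mulr_ge0.
have -> : (k * n)%:R * ((alpha + beta * m%:R) / urn_mass) =
          k%:R * (1 + beta * m%:R / alpha).
  by rewrite /urn_mass natrM; field; rewrite !gt_eqF // ltr0n.
rewrite ler_wpM2l // lerD2l; apply: (@le_trans _ _ (m%:R / alpha)).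
  by rewrite ler_wpM2r ?invr_ge0 ?(ltW alpha_gt0) // ler_piMl.
by rewrite ler_wpM2l // lef_pV2 ?posrE.
Qed.

Lemma mixed_moment_le a S :
  mixed_moment a S <= moment_bound a #|S| * same_colour_prob #|S|.
Proof.
elim: a S => [|a IH] S /=; first by rewrite mul1r.
rewrite (bigID (mem S)) /= mulrDl; apply: lerD.
  rewrite (eq_bigr (fun=> mixed_moment a S)) => [|p pS]; last first.
    by rewrite (setUidPr _) // sub1set.
  by rewrite sumr_const -mulrA mulr_natl; apply/ler_wMn2r/IH.
apply: (@le_trans _ _
  (\sum_(p in ~: S) moment_bound a #|S|.+1 * same_colour_prob #|S|.+1)).
  under eq_bigl do rewrite -in_setC.
  by apply: ler_sum => p; rewrite inE => pS; have := IH (p |: S); rewrite cardsU1 pS.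
rewrite sumr_const -mulr_natl (_ : #|~: S| = #|P| - #|S|)%N; last first.
  by rewrite -(cardsC S) addKn.
rewrite mulrCA [leRHS]mulrAC [leRHS]mulrC.
by apply: ler_wpM2l; [apply: moment_bound_ge0 | apply: same_colour_probS_le].
Qed.

Variable s : nat.

Definition power_sum_deg g : R := \sum_(j < n) (deg g j ^ s)%:R.

Local Notation mu := (mixed_moment s set0).

Lemma urn_deg_moment j : \sum_g urn_law g * (deg g j ^ s)%:R = mu.
Proof.
rewrite -(urn_mixed_moment s set0 j).
by apply: eq_bigr => g _; rewrite forall_in_set0 muln1.
Qed.

Lemma urn_power_sum_mean : \sum_g urn_law g * power_sum_deg g = n%:R * mu.
Proof.
under eq_bigr do rewrite mulr_sumr.
rewrite exchange_big /= (eq_bigr _ (fun j _ => urn_deg_moment j)).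
by rewrite sumr_const card_ord mulr_natl.
Qed.

Lemma urn_deg_moment_cross_le j j' : j != j' ->
  \sum_g urn_law g * ((deg g j ^ s)%:R * (deg g j' ^ s)%:R) <= mu ^+ 2.
Proof.
move=> jj'; rewrite expr2; apply: le_trans _ (urn_mixed_moment2_le s s set0 set0 jj').
under [leRHS]eq_bigr do rewrite !forall_in_set0 !muln1 natrM.
exact: lexx.
Qed.

Lemma urn_deg_moment_sqr_le j :
  \sum_g urn_law g * ((deg g j ^ s)%:R * (deg g j ^ s)%:R) <= moment_bound (s + s) 0.
Proof.
rewrite (_ : \sum_g _ = mixed_moment (s + s) set0); last first.
  rewrite -(urn_mixed_moment _ _ j); apply: eq_bigr => g _.
  by rewrite forall_in_set0 muln1 expnD natrM.
apply: le_trans (mixed_moment_le _ _) _.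
by rewrite cards0 /same_colour_prob !rising_by0 divr1 mulr1.
Qed.

Lemma urn_power_sum_sqr_le :
  \sum_g urn_law g * power_sum_deg g ^+ 2 <=
  n%:R * (moment_bound (s + s) 0 + (n%:R - 1) * mu ^+ 2).
Proof.
have -> : \sum_g urn_law g * power_sum_deg g ^+ 2 = \sum_(j < n) \sum_(j' < n)
            \sum_g urn_law g * ((deg g j ^ s)%:R * (deg g j' ^ s)%:R).
  transitivity (\sum_g \sum_(j < n) \sum_(j' < n)
                  urn_law g * ((deg g j ^ s)%:R * (deg g j' ^ s)%:R)).
    apply: eq_bigr => g _; rewrite expr2 mulr_suml mulr_sumr.
    by apply: eq_bigr => j _; rewrite mulr_sumr mulr_sumr.
  by rewrite exchange_big; apply: eq_bigr => j _; apply: exchange_big.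
rewrite mulr_natl -[in leRHS](card_ord n) -sumr_const; apply: ler_sum => j _.
rewrite (bigD1 j) //=; apply: lerD; first exact: urn_deg_moment_sqr_le.
apply: (@le_trans _ _ (\sum_(j' < n | j' != j) mu ^+ 2)).
  by apply: ler_sum => j' j'j; apply: urn_deg_moment_cross_le; rewrite eq_sym.
rewrite sumr_const (@eq_card _ _ (predC1 j)) // cardC1 card_ord -subn1.
by rewrite -[leLHS]mulr_natl natrB.
Qed.

Lemma urn_power_sum_var_le :
  \sum_g urn_law g * (power_sum_deg g - n%:R * mu) ^+ 2 <=
  n%:R * moment_bound (s + s) 0.
Proof.
rewrite sum_sqr_centered ?urn_law_sum1 ?urn_power_sum_mean //.
apply: le_trans (lerB urn_power_sum_sqr_le (lexx _)) _.
rewrite (_ : _ - _ = n%:R * moment_bound (s + s) 0 - n%:R * mu ^+ 2); last by ring.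
by rewrite lerBlDr lerDl mulr_ge0 ?exprn_ge0 ?mixed_moment_ge0.
Qed.

End PolyaUrn.

Section KoutMaps.
Variables (n' k : nat).
Local Notation n := n'.+1.
Local Notation half_edge := ('I_n * 'I_k)%type.

Definition kout_of_fun (g : {ffun half_edge -> 'I_n}) : kout_map n k :=
  [ffun i => [tuple g (i, l) | l < k]].

Definition fun_of_kout (M : kout_map n k) : {ffun half_edge -> 'I_n} :=
  [ffun p => tnth (M p.1) p.2].

Lemma kout_of_fun_bij : bijective kout_of_fun.
Proof.
exists fun_of_kout => [g|M].
  by apply/ffunP => -[i l]; rewrite !ffunE tnth_mktuple.
apply/ffunP => i; rewrite ffunE; apply: eq_from_tnth => l.
by rewrite tnth_mktuple ffunE.
Qed.

Lemma big_kout_map (R : realType) (E : pred (kout_map n k)) (F : kout_map n k -> R) :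
  \sum_(M | E M) F M = \sum_(g | E (kout_of_fun g)) F (kout_of_fun g).
Proof. exact/reindex/onW_bij/kout_of_fun_bij. Qed.

Lemma indeg_kout_of_fun g j : indeg (kout_of_fun g) j = deg g j.
Proof.
transitivity (\sum_(i < n) \sum_(l < k) (g (i, l) == j))%N.
  apply: eq_bigr => i _; rewrite ffunE -sum1_count /= big_map big_mkcond /= big_enum.
  by apply: eq_bigr => l _; case: (_ == j).
by rewrite pair_big; apply: eq_big => // -[i l]; rewrite ?inE.
Qed.

Lemma card_half_edge : #|{: half_edge}| = (k * n)%N.
Proof. by rewrite card_prod !card_ord mulnC. Qed.

Lemma kout_concentration (R : realType) (s : nat) (law : kout_map n k -> R)
    (alpha beta c w : R) :
  0 < c -> c <= alpha -> 0 <= beta -> beta <= 1 -> 0 < w ->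
  (forall g, law (kout_of_fun g) = urn_law alpha beta g) ->
  1 - moment_bound k c (s + s) 0 / w ^+ 2 <=
    prob law (conc_event s (mu_moment s law) w) <= 1.
Proof.
move=> c_gt0 c_le_alpha beta_ge0 beta_le1 w_gt0 law_urn.
have alpha_gt0 := lt_le_trans c_gt0 c_le_alpha.
have law_ge0 (g : {ffun half_edge -> 'I_n}) : 0 <= urn_law alpha beta g.
  exact: urn_law_ge0.
have law_sum1 := urn_law_sum1 {: half_edge} (ltn0Sn n') alpha_gt0 beta_ge0.
pose mu := mixed_moment n alpha beta s (set0 : {set half_edge}).
have mu_law : mu_moment s law = mu.
  rewrite /mu_moment /expect (big_kout_map xpredT) /=.
  rewrite /mu -(urn_deg_moment _ (ltn0Sn n') alpha_gt0 beta_ge0 s ord0).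
  by apply: eq_bigr => g _; rewrite law_urn indeg_kout_of_fun.
set t := w * Num.sqrt n%:R.
have t_gt0 : 0 < t by rewrite mulr_gt0 // sqrtr_gt0 ltr0n.
have -> : prob law (conc_event s (mu_moment s law) w) =
    \sum_(g : {ffun half_edge -> 'I_n} | `|power_sum_deg R s g - n%:R * mu| < t)
      urn_law alpha beta g.
  rewrite /prob big_kout_map; apply: eq_big => g; last by rewrite law_urn.
  rewrite /conc_event /power_sum mu_law mulrC.
  by under eq_bigr do rewrite indeg_kout_of_fun.
apply/andP; split; last exact: sum_pred_le1 law_ge0 _ law_sum1.
apply: le_trans (chebyshev_sum_lt _ law_ge0 _ law_sum1 t_gt0).
have t_sqr : t ^+ 2 = n%:R * w ^+ 2 by rewrite exprMn sqr_sqrtr ?ler0n // mulrC.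
rewrite lerB // t_sqr invfM mulrA ler_wpM2r ?invr_ge0 ?sqr_ge0 //.
rewrite ler_pdivrMr ?ltr0n // [leRHS]mulrC.
exact: urn_power_sum_var_le _ _ _ c_gt0 c_le_alpha beta_le1 card_half_edge _.
Qed.

End KoutMaps.

Local Open Scope classical_set_scope.

Lemma cvg1_of_inv_sqr_bound (R : realType) (f omega : nat -> R) (C : R) :
  omega @ \oo --> +oo ->
  (forall n, (0 < n)%N -> 0 < omega n -> 1 - C / omega n ^+ 2 <= f n <= 1) ->
  f @ \oo --> (1 : R).
Proof.
move=> /cvgryPge omega_big f_bounds; apply/cvgrPdist_le => e e_gt0; near=> m.
have : Num.max 1 (`|C| / e) <= omega m by near: m; apply: omega_big.
rewrite ge_max => /andP[omega_ge1 omega_geC].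
have omega_gt0 : 0 < omega m by apply: lt_le_trans omega_ge1.
have m_gt0 : (0 < m)%N by near: m; apply: nbhs_infty_gt.
have /andP[f_ge f_le1] := f_bounds m m_gt0 omega_gt0.
rewrite ger0_norm ?subr_ge0 // lerBlDr -lerBlDl; apply: le_trans f_ge.
rewrite lerD2l lerN2; apply: le_trans (ler_wpM2r _ (ler_norm C)) _.
  by rewrite invr_ge0 sqr_ge0.
rewrite ler_pdivrMr ?exprn_gt0 //.
have : `|C| <= omega m * e by rewrite -ler_pdivrMr.
move/le_trans; apply; rewrite mulrC ler_pM2l //.
by rewrite expr2 ler_peMr ?(ltW omega_gt0).
Unshelve. all: by end_near.
Qed.

Lemma law_alpha_kout_of_fun (R : realType) n' k (alpha : R) g :
  law_alpha n'.+1 k alpha (kout_of_fun g) = urn_law alpha 1 g.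
Proof.
rewrite /law_alpha /urn_law /urn_weight /urn_mass card_half_edge rising_by_step1.
by congr (_ / _); apply: eq_bigr => j _; rewrite indeg_kout_of_fun rising_by_step1.
Qed.

Lemma law_unif_kout_of_fun (R : realType) n' k g :
  @law_unif R n'.+1 k (kout_of_fun g) = urn_law 1 0 g.
Proof.
rewrite /law_unif /urn_law /urn_weight /urn_mass card_half_edge rising_by_step0 mul1r.
rewrite big1 => [|j _]; last by rewrite rising_by_step0 expr1n.
by rewrite card_ffun card_tuple !card_ord -expnM mulnC natrX !mul1r.
Qed.

Theorem corollary2 (R : realType) (k s : nat) (omega : nat -> R) :
  omega @ \oo --> +oo ->
  (forall alpha : nat -> R,
     (forall n, 0 < alpha n) ->
     (exists2 c : R, 0 < c & forall n, c <= alpha n) ->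
     (fun n => prob (law_alpha n k (alpha n))
                 (conc_event s (mu_moment s (law_alpha n k (alpha n))) (omega n)))
       @ \oo --> (1 : R))
  /\
  (fun n => prob (@law_unif R n k)
              (conc_event s (mu_moment s (@law_unif R n k)) (omega n)))
    @ \oo --> (1 : R).
Proof.
move=> omega_big; split => [alpha _ [c c_gt0 c_le_alpha]|].
  apply: (cvg1_of_inv_sqr_bound (C := moment_bound k c (s + s) 0) omega_big).
  move=> [//|n'] _ omega_gt0.
  apply: kout_concentration c_gt0 (c_le_alpha _) ler01 (lexx _) omega_gt0 _.
  exact: law_alpha_kout_of_fun.
apply: (cvg1_of_inv_sqr_bound (C := moment_bound k 1 (s + s) 0) omega_big).
move=> [//|n'] _ omega_gt0.
apply: kout_concentration ltr01 (lexx _) (lexx _) ler01 omega_gt0 _.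
exact: law_unif_kout_of_fun.
Qed.
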